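(* Let $g\ge 2$, $n\ge 2$, let $(t_1,\ldots,t_n)$ be a generic $n$-tuple of elements of $T$, let $l\neq m$ be elements of $\{1,\ldots,n\}$, let $A$ be a subset of $\{a_1,\ldots,a_g,b_1,\ldots,b_g\}\cup\{c_j \mid j\in\{1,\ldots,n\}\setminus\{l,m\}\}$, and let $(i,j,k)$ and $(u,v,w)$ be permutations of $(1,2,3)$. Then the collection of sections $$\{s^l_{ij}(x), s^l_{ik}(x) \mid x\in A\}\cup\{s^l_{u,j}(c_m), s^l_{u,k}(c_m)\}$$ has the same common vanishing locus in $S_g(t_1,\ldots,t_n)$ as the collection $$\{s^m_{uv}(x), s^m_{uw}(x)\mid x\in A\}\cup\{s^m_{i,v}(c_l), s^m_{i,w}(c_l)\}.$$
   Context: Let $\Sigma$ be a compact Riemann surface of genus $g$, $p_1,\ldots,p_n\in\Sigma$ distinct points, and fix the presentation $\pi_1(\Sigma\setminus\{p_1,\ldots,p_n\}) = \langle a_1,\ldots,a_g,b_1,\ldots,b_g,c_1,\ldots,c_n \mid \prod_{i=1}^g[a_i,b_i]=\prod_{j=1}^n c_j\rangle$. Let $G=SU(3)$, $T\subset G$ the diagonal maximal torus. An $n$-tuple $(t_1,\ldots,t_n)$ in $T$ is generic if each $t_j$ has centralizer $T$ in $G$ and no product $\lambda_1\cdots\lambda_n$ with $\lambda_i$ an eigenvalue of $t_i$ equals $1$. Let $S_g(t_1,\ldots,t_n) := \{\rho\in\mathrm{Hom}(\pi_1(\Sigma\setminus\{p_1,\ldots,p_n\}),G)\mid\rho(c_i)\sim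 t_i\ \forall i\}/G$ (conjugation quotient), and $V^l_g(t_1,\ldots,t_n):=\{\rho\mid\rho(c_l)=t_l,\ \rho(c_i)\sim t_i\ \forall i\}$, a $T$-bundle over $S_g(t_1,\ldots,t_n)$ under conjugation. For $1\le j,k\le 3$ let $\mathbb{C}_{(jk)}$ (resp. $\mathbb{C}_{(j)}$) be the representation of $T$ in which $\mathrm{diag}(e^{i\theta_1},e^{i\theta_2},e^{i\theta_3})$ acts by $e^{i(\theta_j-\theta_k)}$ (resp. $e^{i\theta_j}$), and $L^l_{jk}$ (resp. $L^l_j$) the associated line bundle $(V^l_g(t_1,\ldots,t_n)\times\mathbb{C}_{(jk)})/T$ (resp. with $\mathbb{C}_{(j)}$). Two kinds of sections are used (note the comma distinguishing them). (i) For a generator $x\in\{a_1,\ldots,a_g,b_1,\ldots,b_g,c_1,\ldots,c_n\}\setminus\{c_l\}$, $s^l_{jk}(x)$ is the section of $L^l_{jk}$ induced by the $T$-equivariant map $V^l_g(t_1,\ldots,t_n)\to\mathbb{C}_{(jk)}$, $\rho\mapsto(\rho(x))_{jk}$ (the $(j,k)$ matrix entry); it vanishes at $[\rho]$ iff $(\rho(x))_{jk}=0$ for a representative $\rho\in V^l_g(t_1,\ldots,t_n)$. (ii) For $c_{i'}$ with $i'\neq l$, $s^l_{j,k}(c_{i'})$ is a section of $L^l_j$ defined via a matrix $A\in SU(3)$ with $A\rho(c_{i'})A^{-1}=t_{i'}$ (for a representative $\rho\in V^l_g(t_1,\ldots,t_n)$; $A$ is unique up to left multiplication by $T$), taking value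 given by the entry $A_{jk}$; it vanishes at $[\rho]$ iff $A_{jk}=0$, equivalently iff the $k$-th coordinate of an eigenvector of $\rho(c_{i'})$ with eigenvalue $(t_{i'})_{jj}$ is zero. *)

From mathcomp Require Import all_boot all_order all_algebra.
From mathcomp Require Import reals.
From mathcomp.real_closed Require Import complex.
Set Implicit Arguments. Unset Strict Implicit. Unset Printing Implicit Defensive.
Import GRing.Theory Num.Theory.
Local Open Scope ring_scope.

Section Defs.
Variable R : realType.
Local Notation C := R[i].

Definition SU3 (M : 'M[C]_3) : bool :=
  (M *m (map_mx (@conjc R) M)^T == 1%:M) && (\det M == 1).

Definition inT (M : 'M[C]_3) : bool := SU3 M && is_diag_mx M.

(* generators of pi_1: a_1..a_g, b_1..b_g, c_1..c_n (0-based indices) *)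
Definition gen (g n : nat) : finType := ('I_g + 'I_g + 'I_n)%type.
Definition ga {g n : nat} (i : 'I_g) : gen g n := inl (inl i).
Definition gb {g n : nat} (i : 'I_g) : gen g n := inl (inr i).
Definition gc {g n : nat} (j : 'I_n) : gen g n := inr j.

Definition commg (x y : 'M[C]_3) : 'M[C]_3 := x * y * x^-1 * y^-1.

(* rho : a homomorphism pi_1(Sigma \ {p_1..p_n}) -> SU(3), given on generators *)
Definition is_hom (g n : nat) (rho : gen g n -> 'M[C]_3) : Prop :=
  (forall x, SU3 (rho x)) /\
  \prod_(i < g) commg (rho (ga i)) (rho (gb i)) = \prod_(j < n) rho (gc j).

Definition conjG (M N : 'M[C]_3) : Prop :=
  exists P : 'M[C]_3, SU3 P /\ P *m M *m invmx P = N.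

Definition generic (n : nat) (t : 'I_n -> 'M[C]_3) : Prop :=
  (forall j, inT (t j)) /\
  (forall j (P : 'M[C]_3), SU3 P -> (P *m t j == t j *m P) = inT P) /\
  (forall lam : 'I_n -> C, (forall j, eigenvalue (t j) (lam j)) ->
      \prod_(j < n) lam j != 1).

(* rho represents a point of S_g(t_1,...,t_n) *)
Definition in_S (g n : nat) (t : 'I_n -> 'M[C]_3) (rho : gen g n -> 'M[C]_3) : Prop :=
  is_hom rho /\ forall j, conjG (rho (gc j)) (t j).

(* rho lies in V^l_g(t_1,...,t_n) *)
Definition in_V (g n : nat) (t : 'I_n -> 'M[C]_3) (l : 'I_n)
  (rho : gen g n -> 'M[C]_3) : Prop :=
  in_S t rho /\ rho (gc l) = t l.

Definition conj_rep (g n : nat) (P : 'M[C]_3) (rho : gen g n -> 'M[C]_3) :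
  gen g n -> 'M[C]_3 := fun x => P *m rho x *m invmx P.

(* vanishing of s^l_{jk}(x) at a representative rho in V^l *)
Definition entry_vanishes (g n : nat) (rho : gen g n -> 'M[C]_3) (x : gen g n)
  (j k : 'I_3) : Prop := rho x j k = 0.

(* vanishing of s^l_{j,k}(c_i') at a representative rho in V^l:
   A_{jk} = 0 for A in SU(3) with A rho(c_i') A^-1 = t_i' *)
Definition eig_vanishes (g n : nat) (t : 'I_n -> 'M[C]_3) (rho : gen g n -> 'M[C]_3)
  (i' : 'I_n) (j k : 'I_3) : Prop :=
  exists A : 'M[C]_3, [/\ SU3 A, A *m rho (gc i') *m invmx A = t i' & A j k = 0].

(* [rho] lies in the common vanishing locus of
   {s^l_{ij}(x), s^l_{ik}(x) | x in A} u {s^l_{u,j}(c_m), s^l_{u,k}(c_m)} *)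
Definition locus (g n : nat) (t : 'I_n -> 'M[C]_3) (l m : 'I_n) (A : {set gen g n})
  (i j k u : 'I_3) (rho : gen g n -> 'M[C]_3) : Prop :=
  exists P : 'M[C]_3, SU3 P /\
    let r := conj_rep P rho in
    [/\ in_V t l r,
        (forall x, x \in A -> entry_vanishes r x i j /\ entry_vanishes r x i k),
        eig_vanishes t r m u j & eig_vanishes t r m u k].

End Defs.

From Pilot Require Import Defs.
From mathcomp Require Import all_boot all_order all_algebra.
From mathcomp Require Import reals.
From mathcomp.real_closed Require Import complex.
From Stdlib Require Import FunctionalExtensionality.
Set Implicit Arguments. Unset Strict Implicit. Unset Printing Implicit Defensive.
Import GRing.Theory Num.Theory.
Local Open Scope ring_scope.
Local Open Scope sesquilinear_scope.

(* Take a representative [r] of [rho] in V^l and [A] in SU(3) with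
   [A r(c_m) A^-1 = t_m].  As [A] is unique up to the torus, the centralizer of
   [t_m], the entries [A_uj] and [A_uk] vanish for one and the same [A], so the
   u-th row of [A] lies on the i-th axis; since [A] is unitary, so does its
   i-th column on the u-th axis.  Then [A r A^-1] represents [rho] in V^m, with
   [A^-1 = A^*] as conjugator for [c_l], and the vanishing of the (i,j), (i,k)
   entries of [r(x)] becomes that of the (u,v), (u,w) entries of [A r(x) A^*].
   The converse inclusion is the same argument with the roles exchanged. *)

Definition conjr (T : unitRingType) (P x : T) : T := P * x / P.

Section RingConjugation.
Variable T : unitRingType.

Lemma conj1r (x : T) : conjr 1 x = x.
Proof. by rewrite /conjr mul1r invr1 mulr1. Qed.

Variable P : T.
Hypothesis P_unit : P \is a GRing.unit.

Lemma conjMr (x y : T) : conjr P (x * y) = conjr P x * conjr P y.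
Proof. by rewrite /conjr !mulrA divrK. Qed.

Lemma conjr1 : conjr P 1 = 1.
Proof. by rewrite /conjr mulr1 divrr. Qed.

Lemma conjr_unit (x : T) : (conjr P x \is a GRing.unit) = (x \is a GRing.unit).
Proof. by rewrite /conjr unitrMl ?unitrV // unitrMr. Qed.

Lemma conjVr (x : T) : (conjr P x)^-1 = conjr P x^-1.
Proof.
have [x_unit | x_nonunit] := boolP (x \is a GRing.unit); last first.
  by rewrite !invr_out ?conjr_unit.
by rewrite /conjr !invrM ?unitrV ?unitrMr // invrK mulrA.
Qed.

Lemma conjrM (Q x : T) : Q \is a GRing.unit ->
  conjr (Q * P) x = conjr Q (conjr P x).
Proof. by move=> Q_unit; rewrite /conjr invrM // !mulrA. Qed.

Lemma conjrK (x : T) : conjr P^-1 (conjr P x) = x.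
Proof. by rewrite -conjrM ?unitrV // mulVr // conj1r. Qed.

Lemma conjr_prod (I : finType) (F : I -> T) :
  conjr P (\prod_(a : I) F a) = \prod_(a : I) conjr P (F a).
Proof. exact: (big_morph _ conjMr conjr1). Qed.

End RingConjugation.

Lemma row_supp_mulmx (T : pzSemiRingType) p n q (B : 'M[T]_(p, n))
    (X : 'M[T]_(n, q)) u i b :
  (forall a, a != i -> B u a = 0) -> (B *m X) u b = B u i * X i b.
Proof.
move=> Bu; rewrite mxE (bigD1 i) //= big1 ?addr0 // => a /Bu->.
exact: mul0r.
Qed.

Lemma unitary_col_supp (C : numClosedFieldType) n (B : 'M[C]_n) u i v :
  B \is unitarymx -> (forall a, a != i -> B u a = 0) -> v != u -> B v i = 0.
Proof.
move=> /unitarymxP BBt Bu vu.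
have entry b : (B *m B^t*) u b = B u i * (B b i)^*.
  by rewrite (row_supp_mulmx _ _ Bu) !mxE.
have /eqP : B u i * (B u i)^* = 1 by rewrite -entry BBt mxE eqxx.
have /eqP : B u i * (B v i)^* = 0 by rewrite -entry BBt mxE eq_sym (negPf vu).
rewrite mulf_eq0 conjC_eq0 => /orP[/eqP-> | /eqP //].
by rewrite mul0r eq_sym oner_eq0.
Qed.

Lemma uniq3_neq (i j k a : 'I_3) :
  uniq [:: i; j; k] -> a != i -> a = j \/ a = k.
Proof.
move=> ijk ai; have : a \in [:: i; j; k].
  by move: i j k a ijk {ai}; do 4! case=> [[|[|[|//]]] ?].
by rewrite !inE (negPf ai) /= => /orP[] /eqP; [left | right].
Qed.

Section SU3.
Variable R : realType.
Local Notation C := R[i].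
Local Notation M := 'M[C]_3.

Lemma conjc_trmx (P : M) : (map_mx (@conjc R) P)^T = P^t*.
Proof. by apply/matrixP => a b; rewrite !mxE. Qed.

Lemma SU3E (P : M) : SU3 P = (P \is unitarymx) && (\det P == 1).
Proof. by rewrite /SU3 conjc_trmx. Qed.

Lemma SU3_unitary (P : M) : SU3 P -> P \is unitarymx.
Proof. by rewrite SU3E => /andP[]. Qed.

Lemma SU3_unit (P : M) : SU3 P -> P \in unitmx.
Proof. by move/SU3_unitary/unitarymx_unit. Qed.

Lemma invmx_SU3 (P : M) : SU3 P -> invmx P = P^t*.
Proof. by move/SU3_unitary/invmx_unitary. Qed.

Lemma SU3M (P Q : M) : SU3 P -> SU3 Q -> SU3 (P *m Q).
Proof.
rewrite !SU3E => /andP[uP /eqP dP] /andP[uQ /eqP dQ].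
by rewrite mul_unitarymx // det_mulmx dP dQ mulr1 eqxx.
Qed.

Lemma SU3_trC (P : M) : SU3 P -> SU3 (P^t*).
Proof.
rewrite !SU3E => /andP[uP /eqP dP].
by rewrite trmxC_unitary uP det_map_mx det_tr dP rmorph1 eqxx.
Qed.

Lemma conjrE (P X : M) : conjr P X = P *m X *m invmx P.
Proof. by []. Qed.

Lemma SU3_conjr (P X : M) : SU3 P -> SU3 X -> SU3 (conjr P X).
Proof. by move=> sP sX; rewrite conjrE (invmx_SU3 sP) !SU3M // SU3_trC. Qed.

Lemma conj_repE g n (P : M) (rho : gen g n -> M) x :
  conj_rep P rho x = conjr P (rho x).
Proof. by []. Qed.

Lemma conj_repM g n (P Q : M) (rho : gen g n -> M) :
  P \in unitmx -> Q \in unitmx ->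
  conj_rep (Q *m P) rho = conj_rep Q (conj_rep P rho).
Proof. by move=> uP uQ; apply: functional_extensionality => x; apply: conjrM. Qed.

Lemma commg_conjr (P x y : M) : P \in unitmx ->
  Defs.commg (conjr P x) (conjr P y) = conjr P (Defs.commg x y).
Proof. by move=> uP; rewrite /Defs.commg !conjVr // !conjMr. Qed.

Lemma is_hom_conj g n (P : M) (rho : gen g n -> M) :
  SU3 P -> is_hom rho -> is_hom (conj_rep P rho).
Proof.
move=> sP [sr hr]; have uP := SU3_unit sP.
split=> [x|]; first exact: SU3_conjr (sr x).
under eq_bigr do rewrite !conj_repE commg_conjr //.
under [RHS]eq_bigr do rewrite conj_repE.
by rewrite -!conjr_prod // hr.
Qed.

Lemma conjG_conjr (P X Y : M) : SU3 P -> conjG X Y -> conjG (conjr P X) Y.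
Proof.
move=> sP [Q [sQ <-]]; have uP := SU3_unit sP.
exists (Q *m invmx P); split; first by rewrite SU3M // invmx_SU3 // SU3_trC.
by rewrite -!conjrE mulmxE conjrM ?unitrV ?SU3_unit // conjrK.
Qed.

Lemma in_S_conj g n (t : 'I_n -> M) (P : M) (rho : gen g n -> M) :
  SU3 P -> in_S t rho -> in_S t (conj_rep P rho).
Proof.
by move=> sP [hr cr]; split=> [|j]; [exact: is_hom_conj | exact: conjG_conjr].
Qed.

Lemma conjugator_entry_eq0 n (t : 'I_n -> M) m (X A1 A2 : M) a b :
  generic t -> SU3 A1 -> SU3 A2 -> conjr A1 X = t m -> conjr A2 X = t m ->
  A2 a b = 0 -> A1 a b = 0.
Proof.
move=> [_ [cent _]] sA1 sA2 e1 e2 A2ab.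
have [uA1 uA2] := (SU3_unit sA1, SU3_unit sA2).
pose D := A2 *m invmx A1.
have sD : SU3 D by rewrite SU3M // invmx_SU3 // SU3_trC.
have Dt : conjr D (t m) = t m.
  by rewrite /D mulmxE -{1}e1 conjrM ?unitrV // conjrK.
have : D *m t m == t m *m D by rewrite -{2}Dt conjrE mulmxKV // SU3_unit.
rewrite cent // => /andP[_ /diag_mxP[d dD]].
have : \prod_c d 0 c != 0.
  by rewrite -det_diag -dD; case/andP: sD => _ /eqP->; exact: oner_neq0.
move=> /prodf_neq0/(_ a isT) da.
have A2E : A2 = D *m A1 by rewrite mulmxKV.
move: A2ab; rewrite A2E dD mul_diag_mx mxE => /eqP.
by rewrite mulf_eq0 (negPf da) => /eqP.
Qed.

Lemma locus_swap g n (t : 'I_n -> M) (l m : 'I_n) (A : {set gen g n})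
    (i j k u v w : 'I_3) (rho : gen g n -> M) :
  generic t -> uniq [:: i; j; k] -> uniq [:: u; v; w] ->
  locus t l m A i j k u rho -> locus t m l A u v w i rho.
Proof.
move=> gt ijk uvw [P [sP [[Sr rl] rA [A1 [sA1 eA1 A1uj]] [A2 [sA2 eA2 A2uk]]]]].
set r := conj_rep P rho in Sr rl rA eA1 eA2 *.
have A1uk : A1 u k = 0 := conjugator_entry_eq0 gt sA1 sA2 eA1 eA2 A2uk.
have A1u a : a != i -> A1 u a = 0 by move/(uniq3_neq ijk) => [->|->].
have [vu wu] : v != u /\ w != u.
  by move: uvw; rewrite /= !inE !negb_or !(eq_sym u) => /andP[/andP[-> ->]].
have A1vi := unitary_col_supp (SU3_unitary sA1) A1u vu.
have A1wi := unitary_col_supp (SU3_unitary sA1) A1u wu.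
have rAi x : x \in A -> forall b, b != i -> r x i b = 0.
  by case/rA=> rij rik b /(uniq3_neq ijk) [->|->].
have eig_l b : A1 b i = 0 -> eig_vanishes t (conj_rep A1 r) l i b.
  move=> A1bi; exists (invmx A1); split.
  - by rewrite invmx_SU3 // SU3_trC.
  - by rewrite -conjrE conj_repE rl conjrK // SU3_unit.
  - by rewrite invmx_SU3 // !mxE A1bi conjC0.
exists (A1 *m P); split; first exact: SU3M.
rewrite conj_repM ?SU3_unit //; split.
- by split; [exact: in_S_conj | exact: eA1].
- move=> x /rAi rxi.
  have A1rx b : b != i -> (A1 *m r x) u b = 0.
    by move=> bi; rewrite (row_supp_mulmx _ _ A1u) rxi // mulr0.
  by split; rewrite /entry_vanishes conj_repE conjrE invmx_SU3 //
    (row_supp_mulmx _ _ A1rx) !mxE ?A1vi ?A1wi conjC0 mulr0.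
- exact: eig_l.
- exact: eig_l.
Qed.

End SU3.

Theorem lemma2p6 (R : realType) (g n : nat) (t : 'I_n -> 'M[R[i]]_3)
  (l m : 'I_n) (A : {set gen g n}) (i j k u v w : 'I_3) :
  (2 <= g)%N -> (2 <= n)%N ->
  generic t ->
  l != m ->
  gc l \notin A -> gc m \notin A ->
  uniq [:: i; j; k] -> uniq [:: u; v; w] ->
  forall rho : gen g n -> 'M[R[i]]_3,
    in_S t rho ->
    (locus t l m A i j k u rho <-> locus t m l A u v w i rho).
Proof.
move=> _ _ gt _ _ _ ijk uvw rho _.
by split; apply: locus_swap.
Qed.
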